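(* For every integer $s\ge5$, $F_{s,6}(x)=\frac{1}{(s-1)!}\,g_{s,6}(x)\prod_{p=6}^{s}(x-p)$ (an empty product equals $1$), where $g_{s,6}(x)=x^4-(30s-16)x^3+(150s^2-90s+11)x^2-(240s^3-90s^2+4)x+120s^4$.
   Context: For an integer $j\ge0$, $\binom{x}{j}=x(x-1)\cdots(x-j+1)/j!$ as a polynomial in $x$, and $\binom{x}{j}=0$ for $j<0$. For integers $s\ge1$, $k\ge1$, the Moser polynomial is $F_{s,k}(x)=\sum_{p=1}^{s}(-1)^{p-1}p^{k-1}\binom{x}{s-p}$. *)

From HB Require Import structures.
From mathcomp Require Import all_boot all_order all_algebra.
Set Implicit Arguments. Unset Strict Implicit. Unset Printing Implicit Defensive.
Import Order.TTheory GRing.Theory Num.Theory.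
Local Open Scope ring_scope.

Definition binomp (j : nat) : {poly rat} :=
  (j`!%:R)^-1 *: \prod_(0 <= i < j) ('X - i%:R%:P).

(* Moser polynomial F_{s,k}(x) = sum_{p=1}^{s} (-1)^(p-1) p^(k-1) binom(x, s-p);
   note s - p >= 0 throughout the range, so no truncation occurs. *)
Definition moser (s k : nat) : {poly rat} :=
  \sum_(1 <= p < s.+1) (((-1) ^+ (p.-1) * (p%:R) ^+ (k.-1)) *: binomp (s - p)).

Definition g6 (s : nat) : {poly rat} :=
  let S : rat := s%:R in
  'X^4 - (30 * S - 16)%:P * 'X^3 + (150 * S ^+ 2 - 90 * S + 11)%:P * 'X^2
  - (240 * S ^+ 3 - 90 * S ^+ 2 + 4)%:P * 'X + (120 * S ^+ 4)%:P.

From HB Require Import structures.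
From mathcomp Require Import all_boot all_order all_algebra.
From mathcomp.algebra_tactics Require Import ring.
Import Order.TTheory GRing.Theory Num.Theory.
Local Open Scope ring_scope.

(* Write T_{s,k} = sum_{p=1}^s (-1)^(p-1) p^k binom(x, s-p), so that F_{s,6} = T_{s,5}.
   Pascal's rule for binom(x, .) together with the binomial expansion of (p+1)^k gives
   T_{s+1,k} = binom(x, s) - sum_{i<=k} C(k,i) T_{s,i}.  For k <= 5 and s >= 6 this
   recursion is solved by (s-1)! T_{s,k} = h_k(s) prod_{p=6}^{s-1} (x - p) with explicit
   polynomials h_k of degree 5 in x and k in s: the induction step reduces to one
   polynomial identity in x and s for each k, and the base case s = 6 is a direct
   computation.  Finally h_5(s) = g_{s,6}(x) (x - s), and s = 5 is checked directly. *)

Definition moser_pow (s k : nat) : {poly rat} :=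
  \sum_(1 <= p < s.+1) (((-1) ^+ p.-1 * p%:R ^+ k) *: binomp (s - p)).

Lemma moserE s k : moser s k.+1 = moser_pow s k.
Proof. by []. Qed.

Lemma moser_powS s k :
  moser_pow s.+1 k = binomp s - \sum_(i < k.+1) 'C(k, i)%:R *: moser_pow s i.
Proof.
rewrite /moser_pow big_ltn // expr0 expr1n mul1r scale1r subSS subn0 big_add1 /=.
rewrite (eq_bigr (fun i : 'I_k.+1 => \sum_(1 <= p < s.+1)
   ('C(k, i)%:R * ((-1) ^+ p.-1 * p%:R ^+ i)) *: binomp (s - p))); last first.
  by move=> i _; rewrite scaler_sumr; apply: eq_bigr => p _; rewrite scalerA.
rewrite exchange_big /= -sumrN; congr (_ + _).
apply: eq_big_nat => p /andP [p_gt0 _].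
rewrite subSS -scaler_suml -scaleNr; congr (_ *: _).
rewrite -natr1 exprD1n -{1}(prednK p_gt0) exprS /= mulN1r mulNr mulr_sumr.
by rewrite -sumrN sumrN; congr (- _); apply: eq_bigr => i _; rewrite -mulr_natl mulrCA.
Qed.

Lemma natr_fact_neq0 n : (n`!%:R : rat) != 0.
Proof. by rewrite pnatr_eq0 -lt0n fact_gt0. Qed.

Lemma scale_fact_binomp j :
  j`!%:R *: binomp j = \prod_(0 <= i < j) ('X - (i%:R : rat)%:P).
Proof. by rewrite /binomp scalerA mulfV ?scale1r // natr_fact_neq0. Qed.

Lemma scale_fact_binomp_le n j : (j <= n)%N ->
  n`!%:R *: binomp j = (n`! %/ j`!)%:R *: \prod_(0 <= i < j) ('X - (i%:R : rat)%:P).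
Proof.
move=> le_jn; rewrite -[in RHS]scale_fact_binomp [RHS]scalerA -natrM divnK //.
by rewrite (fact_split le_jn) dvdn_mulr.
Qed.

Lemma scale_fact_moser_pow n k :
  n`!%:R *: moser_pow n.+1 k = \sum_(1 <= p < n.+2)
    ((-1) ^+ p.-1 * p%:R ^+ k * (n`! %/ (n.+1 - p)`!)%:R)%:P *
     \prod_(0 <= i < n.+1 - p) ('X - (i%:R : rat)%:P).
Proof.
rewrite /moser_pow scaler_sumr; apply: eq_big_nat => p /andP [p_gt0 _].
have le_n : (n.+1 - p <= n)%N by rewrite leq_subLR -add1n leq_add2r.
by rewrite scalerA mulrC -scalerA scale_fact_binomp_le // scalerA mul_polyC.
Qed.

(* h_k(x) with the constant s passed as the polynomial S; the coefficients were obtained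
   by solving the recursion symbolically. *)
Definition moser_cofactor (k : nat) (S : {poly rat}) : {poly rat} :=
  match k with
  | 0 =>
    'X^5 - 15 * 'X^4 + 85 * 'X^3 - 225 * 'X^2 + 274 * 'X - 120
  | 1 =>
    'X^5 - (S + 14) * 'X^4 + (14 * S + 71) * 'X^3
      - (71 * S + 154) * 'X^2 + (154 * S + 120) * 'X - 120 * S
  | 2 =>
    'X^5 - (3 * S + 12) * 'X^4 + (2 * S ^+ 2 + 36 * S + 47) * 'X^3
      - (24 * S ^+ 2 + 141 * S + 60) * 'X^2 + (94 * S ^+ 2 + 180 * S) * 'X - 120 * S ^+ 2
  | 3 =>
    'X^5 - (7 * S + 8) * 'X^4 + (12 * S ^+ 2 + 62 * S + 11) * 'X^3
      + (- 6 * S ^+ 3 - 108 * S ^+ 2 - 131 * S + 20) * 'X^2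
      + (54 * S ^+ 3 + 240 * S ^+ 2 - 20 * S) * 'X - 120 * S ^+ 3
  | 4 =>
    'X^5 - 15 * S * 'X^4 + (50 * S ^+ 2 + 60 * S - 25) * 'X^3
      + (- 60 * S ^+ 3 - 240 * S ^+ 2 + 75 * S) * 'X^2
      + (24 * S ^+ 4 + 300 * S ^+ 3 - 50 * S ^+ 2) * 'X - 120 * S ^+ 4
  | 5 =>
    'X^5 + (- 31 * S + 16) * 'X^4 + (180 * S ^+ 2 - 106 * S + 11) * 'X^3
      + (- 390 * S ^+ 3 + 180 * S ^+ 2 - 11 * S - 4) * 'X^2
      + (360 * S ^+ 4 - 90 * S ^+ 3 + 4 * S) * 'X - 120 * S ^+ 5
  | _ => 0
  end.

(* [ring] treats closed nat terms such as ['C(5, 2)] or [5`! %/ 3`!] as atoms. *)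
Ltac eval_nat_constants := repeat match goal with
  | |- context[binomial ?a ?b] => let v := eval vm_compute in (binomial a b) in
      rewrite (_ : binomial a b = v); last by []
  | |- context[subn ?a ?b] => let v := eval vm_compute in (subn a b) in
      rewrite (_ : subn a b = v); last by []
  | |- context[divn ?a ?b] => let v := eval vm_compute in (divn a b) in
      rewrite (_ : divn a b = v); last by []
  | |- context[predn ?a] => let v := eval vm_compute in (predn a) in
      rewrite (_ : predn a = v); last by []
  | |- context[factorial ?a] => let v := eval vm_compute in (factorial a) in
      rewrite (_ : factorial a = v); last by []
  end.

Lemma moser_cofactor_step k S : (k <= 5)%N ->
  \prod_(0 <= i < 6) ('X - (i%:R : rat)%:P) - S * \sum_(i < k.+1) 'C(k, i)%:R *: moser_cofactor i S
  = moser_cofactor k (S + 1) * ('X - S).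
Proof.
rewrite big_mkord; case: k => [|[|[|[|[|[|k]]]]]] // _;
  rewrite !big_ord_recr !big_ord0 /= -!mul_polyC !polyC_natr; eval_nat_constants; ring.
Qed.

Lemma scale_fact_moser_pow6 k : (k <= 5)%N ->
  5`!%:R *: moser_pow 6 k = moser_cofactor k 6%:R%:P.
Proof.
case: k => [|[|[|[|[|[|k]]]]]] // _;
  rewrite scale_fact_moser_pow big_add1 big_mkord !big_ord_recr big_ord0 /=;
  eval_nat_constants; rewrite !big_nat_recr ?big_geq //=; ring.
Qed.

Lemma scale_fact_moser_pow_ge6 s k : (6 <= s)%N -> (k <= 5)%N ->
  (s.-1)`!%:R *: moser_pow s k =
  moser_cofactor k s%:R%:P * \prod_(6 <= p < s) ('X - (p%:R : rat)%:P).
Proof.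
elim: s k => // s IH k; rewrite leq_eqVlt ltnS => /orP [/eqP <- | le6s] le_k5.
  by rewrite big_geq // mulr1 scale_fact_moser_pow6.
set P := \prod_(6 <= i < s) ('X - (i%:R : rat)%:P).
have factS_pred : s`! = (s * (s.-1)`!)%N.
  have s_gt0 : (0 < s)%N by apply: leq_trans le6s.
  by rewrite -{1}(prednK s_gt0) factS prednK.
have IHscaled i : (i <= k)%N ->
    s`!%:R *: moser_pow s i = s%:R%:P * moser_cofactor i s%:R%:P * P.
  move=> le_ik; rewrite factS_pred natrM -scalerA IH ?(leq_trans le_ik) //.
  by rewrite -mul_polyC polyC_natr mulrA.
rewrite [in RHS]big_nat_recr //= moser_powS scalerBr scaler_sumr scale_fact_binomp.
rewrite (big_cat_nat (leq0n 6) le6s) /= -/P.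
rewrite (eq_bigr (fun i : 'I_k.+1 =>
    s%:R%:P * ('C(k, i)%:R *: moser_cofactor i s%:R%:P) * P)); last first.
  move=> i _; rewrite scalerA mulrC -scalerA IHscaled; last by rewrite -ltnS.
  by rewrite scalerAl scalerAr.
rewrite -mulr_suml -mulr_sumr -mulrBl moser_cofactor_step //.
by rewrite -natr1 rmorphD /= polyC1 -mulrA [P * _]mulrC.
Qed.

Lemma moser_cofactor5 s : moser_cofactor 5 (s%:R : rat)%:P = g6 s * ('X - s%:R%:P).
Proof. by rewrite /moser_cofactor /g6; ring. Qed.

Lemma scale_fact_moser_pow5 : 4`!%:R *: moser_pow 5 5 = g6 5.
Proof.
rewrite scale_fact_moser_pow /g6 big_add1 big_mkord !big_ord_recr big_ord0 /=.
by eval_nat_constants; rewrite !big_nat_recr ?big_geq //=; ring.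
Qed.

Theorem mainTheorem9 (s : nat) (hs : (5 <= s)%N) :
  moser s 6 =
  ((s.-1)`!%:R : rat)^-1 *: (g6 s * \prod_(6 <= p < s.+1) ('X - (p%:R : rat)%:P)).
Proof.
rewrite moserE; apply: (@scalerI _ _ ((s.-1)`!%:R)); first exact: natr_fact_neq0.
rewrite scalerA mulfV ?natr_fact_neq0 // scale1r.
move: hs; rewrite leq_eqVlt => /orP [/eqP <- | le6s].
  by rewrite big_geq // mulr1 scale_fact_moser_pow5.
rewrite scale_fact_moser_pow_ge6 // moser_cofactor5 big_nat_recr //=.
by rewrite -mulrA [_ * (_ - _)]mulrC.
Qed.
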